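(* Fix $\delta\in(0,1)$. For $x$ large enough and any $\epsilon>0$, $$\sum_{\substack{x^{\delta}<d\le x\\ d\in \mathcal S(x,(\log x)^2)}}\frac{3^{\omega(d)}}{d}\ \ll\ x^{-\frac{\delta}{2}+\epsilon}.$$ Moreover, there is a positive constant $c$ such that for every positive integer $t$ with $x^{1/t}\ge(\log x)^2$, $$\sum_{\substack{x^{\delta}<d\le x\\ d\in \mathcal S(x,x^{1/t})}}\frac{3^{\omega(d)}}{d}\ \ll\ (\log x)^3\exp(-c\,t\log t).$$
   Context: For $x,y\ge1$, $\mathcal S(x,y)$ denotes the set of natural numbers less than $x$ all of whose prime factors are less than $y$ ($y$-smooth numbers). $\omega(d)$ denotes the number of distinct prime divisors of $d$. *)

From HB Require Import structures.
From mathcomp Require Import all_boot all_order all_algebra.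
From mathcomp Require Import all_classical all_reals all_analysis.
Set Implicit Arguments. Unset Strict Implicit. Unset Printing Implicit Defensive.
Import Order.TTheory GRing.Theory Num.Theory.
Local Open Scope ring_scope.

Definition omega (d : nat) : nat := size (primes d).

Definition in_smooth {R : realType} (x y : R) (d : nat) : bool :=
  (0 < d)%N && (d%:R < x) && all (fun p : nat => p%:R < y) (primes d).

Definition smooth_sum {R : realType} (x delta y : R) : R :=
  \sum_(d < (Num.trunc x).+1 |
          (powR x delta < (d : nat)%:R) && ((d : nat)%:R <= x) && in_smooth x y d)
     (3%:R ^+ omega d / (d : nat)%:R).

From HB Require Import structures.
From mathcomp Require Import all_boot all_order all_algebra.
From mathcomp Require Import all_classical all_reals all_analysis.
From mathcomp Require Import zify ring lra.
Import Order.TTheory GRing.Theory Num.Theory.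
Set Implicit Arguments. Unset Strict Implicit. Unset Printing Implicit Defensive.
Local Open Scope ring_scope.

(* Rankin's trick: for [0 <= α < 1] every [d > x^δ] has [1 / d <= x^(-δ α) d^(α - 1)],
   so the sum is at most [x^(-δ α)] times the Euler product over [p < y] of
   [1 + 3 (q + q^2 + ...)] with [q = p^(α - 1)], hence at most
   [x^(-δ α) exp (sum_(p < y) 3 q / (1 - q))].  Chebyshev's bound [prod_(p <= n) p <= 4^n]
   and Legendre's formula for [n!] give Mertens' estimates
   [sum_(p <= y) ln p / p <= ln y + O(1)] and [sum_(p <= y) 1 / p <= ln ln y + O(1)],
   which control the exponent.  For [y = (ln x)^2] take [α] slightly below [1/2]: the
   exponent is then [o(ln x)].  For [y = x^(1/t)] take [α = ln t / (2 ln y)]: then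
   [x^(-δ α) = exp (-δ t ln t / 2)] while the exponent is [3 ln ln y + O(t)]. *)

Section PrimeProducts.
Local Open Scope nat_scope.

Lemma bin_mid_leq m : 'C(m.*2.+1, m) <= 4 ^ m.
Proof.
have bin_sym : 'C(m.*2.+1, m) = 'C(m.*2.+1, m.+1).
  by rewrite -bin_sub ?subSn -?addnn ?addnK //; lia.
have two_terms : 'C(m.*2.+1, m) + 'C(m.*2.+1, m.+1) <= 2 ^ m.*2.+1.
  have := expnDn 1 1 m.*2.+1; rewrite addn1 => ->.
  rewrite (bigD1 (inord m)) //= (bigD1 (inord m.+1)) /=; last first.
    by apply/eqP => /(congr1 val) /=; rewrite !inordK //; lia.
  by rewrite !inordK ?exp1n ?muln1 ?addnA ?leq_addr //; lia.
rewrite -(leq_pmul2l (isT : 0 < 2)) mul2n -addnn {2}bin_sym.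
by rewrite (leq_trans two_terms) // expnS -mul2n expnM.
Qed.

Lemma prime_dvd_fact_leq p k : prime p -> p %| k`! -> p <= k.
Proof.
move=> p_pr; elim: k => [|k IHk]; first by rewrite dvdn1 => /eqP p1; rewrite p1 in p_pr.
by rewrite factS Euclid_dvdM // => /orP[/dvdn_leq-> // | /IHk/leqW].
Qed.

Lemma prod_uniq_primes_dvdn (r : seq nat) c : uniq r ->
  {in r, forall p, prime p && (p %| c)} -> \prod_(p <- r) p %| c.
Proof.
elim: r => [|a r IHr] /=; first by rewrite big_nil dvd1n.
move=> /andP[a_r uniq_r] r_dvd; have /andP[a_pr a_c] := r_dvd a (mem_head _ _).
have {}r_dvd : {in r, forall p, prime p && (p %| c)}.
  by move=> p p_r; apply: r_dvd; rewrite inE p_r orbT.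
rewrite big_cons Gauss_dvd ?a_c ?IHr // big_seq.
apply: (big_ind (coprime a)) => [|m n a_m a_n|p p_r]; first exact: coprimen1.
  by rewrite coprimeMr a_m.
have /andP[p_pr _] := r_dvd p p_r.
by rewrite prime_coprime // dvdn_prime2 //; apply: contraNneq a_r => ->.
Qed.

Lemma prod_mid_primes_dvd_bin m :
  \prod_(m.+2 <= p < m.*2.+2 | prime p) p %| 'C(m.*2.+1, m).
Proof.
rewrite -big_filter; apply: prod_uniq_primes_dvdn; first exact/filter_uniq/iota_uniq.
move=> p; rewrite mem_filter mem_index_iota => /andP[p_pr /andP[lo hi]].
rewrite p_pr /=.
have fact_eq : 'C(m.*2.+1, m) * (m`! * m.+1`!) = m.*2.+1`!.
  have -> : m.+1 = m.*2.+1 - m by lia.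
  by rewrite bin_fact //; lia.
have : p %| 'C(m.*2.+1, m) * (m`! * m.+1`!) by rewrite fact_eq dvdn_fact ?prime_gt0.
rewrite Gauss_dvdl // prime_coprime // Euclid_dvdM // negb_or.
by apply/andP; split; apply/negP => /(prime_dvd_fact_leq p_pr); lia.
Qed.

Lemma prod_primes_leq_exp4 n : \prod_(0 <= p < n.+1 | prime p) p <= 4 ^ n.
Proof.
elim/ltn_ind: n => n IHn.
have [n_small|n_big] := leqP n 2.
  by case: n n_small {IHn} => [|[|[|]]] // _; rewrite unlock.
have [m [n_odd|n_even]] : exists m, n = m.*2.+1 \/ n = m.*2.+2.
  exists n.-1./2; have := odd_double_half n.-1; rewrite -!muln2.
  by case: (odd n.-1) => /= h; [right|left]; lia.
- rewrite n_odd (@big_cat_nat _ _ _ m.+2) //=; last by lia.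
  apply: (@leq_trans (4 ^ m.+1 * 4 ^ m)); last by rewrite -expnD leq_pexp2l //; lia.
  apply: leq_mul; first by apply: IHn; lia.
  apply: leq_trans (bin_mid_leq m).
  by apply: dvdn_leq (prod_mid_primes_dvd_bin m); rewrite bin_gt0; lia.
- have n_not_prime : prime n = false.
    apply/negP => n_pr; have : 2 %| n by rewrite n_even -doubleS -muln2 dvdn_mull.
    by rewrite dvdn_prime2 // n_even; lia.
  rewrite big_mkcond big_nat_recr //= -big_mkcond /= n_not_prime muln1 n_even.
  by apply: leq_trans (IHn _ _) _; rewrite ?leq_pexp2l //; lia.
Qed.

Lemma prod_primes_expn_divn_leq_fact n :
  \prod_(0 <= p < n.+1 | prime p) p ^ (n %/ p) <= n`!.
Proof.
apply: (@leq_trans (\prod_(0 <= p < n.+1 | prime p) p ^ logn p n`!)).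
  apply: leq_prod => p p_pr; rewrite leq_pexp2l ?prime_gt0 // logn_fact //.
  case: n => [|n]; first by rewrite div0n.
  by rewrite big_ltn // expn1 leq_addr.
rewrite (big_nat_widen _ _ _ _ _ (fact_geq n : n.+1 <= n`!.+1)).
exact: dvdn_leq (fact_gt0 n) (dvdn_part [pred p | prime p && (p < n.+1)] n`!).
Qed.

Lemma fact_leq_expn n : n`! <= n ^ n.
Proof.
elim: n => // n IHn; rewrite factS expnS leq_mul2l /=.
by apply: leq_trans IHn _; case: n => // n; rewrite leq_exp2r.
Qed.

Lemma prod_expn_logn d m : 0 < d -> d <= m -> \prod_(p < m.+1) p ^ logn p d = d.
Proof.
by move=> d_gt0 le_dm; rewrite -[RHS](partnT d_gt0) (widen_partn _ le_dm) big_mkord.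
Qed.

End PrimeProducts.

Section Mertens.
Variable R : realType.

Local Notation lnp_sum N := (\sum_(0 <= p < N.+1 | prime p) ln (p%:R : R) / p%:R).
Local Notation invp_sum N := (\sum_(0 <= p < N.+1 | prime p) (p%:R : R)^-1).

Lemma ln_natr_prod (I : Type) (r : seq I) (P : pred I) (F : I -> nat) :
  (forall i, P i -> (0 < F i)%N) ->
  ln ((\prod_(i <- r | P i) F i)%:R : R) = \sum_(i <- r | P i) ln (F i)%:R.
Proof.
move=> F_gt0; elim: r => [|a r IHr]; first by rewrite !big_nil ln1.
rewrite !big_cons; case: ifP => // Pa.
by rewrite natrM lnM ?IHr ?posrE ?ltr0n ?F_gt0 // prodn_cond_gt0.
Qed.

Lemma natr_divn_ge n p : (0 < p)%N -> n%:R / p%:R - 1 <= (n %/ p)%:R :> R.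
Proof.
move=> p_gt0; rewrite lerBlDr ler_pdivrMr ?ltr0n //.
rewrite {1}(divn_eq n p) natrD natrM mulrDl mul1r lerD2l ler_nat.
exact/ltnW/ltn_pmod.
Qed.

Lemma mertens1 n : (0 < n)%N -> lnp_sum n <= ln n%:R + ln 4.
Proof.
move=> n_gt0; have n_pos : (0 : R) < n%:R by rewrite ltr0n.
have ln_prime_ge0 p : prime p -> (0 : R) <= ln p%:R.
  by move=> p_pr; rewrite ln_ge0 // ler1n prime_gt0.
have legendre : \sum_(0 <= p < n.+1 | prime p) (n %/ p)%:R * ln (p%:R : R)
    <= n%:R * ln n%:R.
  have := leq_trans (prod_primes_expn_divn_leq_fact n) (fact_leq_expn n).
  rewrite -(ler_nat R) -ler_ln ?posrE ?ltr0n ?expn_gt0 ?n_gt0 //; last first.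
    by rewrite prodn_cond_gt0 // => p p_pr; rewrite expn_gt0 prime_gt0.
  rewrite ln_natr_prod; last by move=> p p_pr; rewrite expn_gt0 prime_gt0.
  move=> ln_le; apply: le_trans (le_trans ln_le _); last by rewrite natrX lnXn // mulr_natl.
  by apply: ler_sum => p p_pr; rewrite natrX lnXn ?ltr0n ?prime_gt0 // mulr_natl.
have chebyshev : \sum_(0 <= p < n.+1 | prime p) ln (p%:R : R) <= n%:R * ln 4.
  have := prod_primes_leq_exp4 n.
  rewrite -(ler_nat R) -ler_ln ?posrE ?ltr0n ?expn_gt0 //; last first.
    by rewrite prodn_cond_gt0 // => p; apply: prime_gt0.
  rewrite ln_natr_prod; last exact: prime_gt0.
  by rewrite natrX lnXn // mulr_natl.
rewrite -(ler_pM2l n_pos) mulrDr mulr_sumr.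
apply: le_trans (lerD legendre chebyshev); rewrite -big_split /=.
apply: ler_sum => p p_pr; have p_pos : (0 : R) < p%:R by rewrite ltr0n prime_gt0.
rewrite mulrA mulrAC -[X in _ <= _ + X]mul1r -mulrDl.
by apply: ler_wpM2r; rewrite ?ln_prime_ge0 // -lerBlDr natr_divn_ge ?prime_gt0.
Qed.

Lemma sum_primes_recr (F : nat -> R) N :
  \sum_(0 <= p < N.+2 | prime p) F p =
  \sum_(0 <= p < N.+1 | prime p) F p + (if prime N.+1 then F N.+1 else 0).
Proof. by rewrite big_mkcond big_nat_recr //= -big_mkcond. Qed.

Lemma ln_ratio_ge (a b : R) : 0 < a -> 0 < b -> 1 - a / b <= ln b - ln a.
Proof.
move=> a_gt0 b_gt0; have : -1 < a / b - 1 by have := divr_gt0 a_gt0 b_gt0; lra.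
by move/le_ln1Dx; rewrite addrC subrK ln_div ?posrE //; lra.
Qed.

Definition mertens2_const : R := 1 + ln 4 / ln 2 - ln (ln 2).

(* Discrete Abel summation: the slack term, nonnegative by [mertens1], is what
   makes the bound on the sum of 1/p inductive. *)
Lemma mertens2_slack k :
  invp_sum k.+2 + (ln k.+2%:R + ln 4 - lnp_sum k.+2) / ln k.+2%:R
  <= ln (ln k.+2%:R) + mertens2_const.
Proof.
rewrite /mertens2_const; elim: k => [|k IHk].
  rewrite !sum_primes_recr big_mkcond !big_nat_recr //= big_nil big_mkcond.
  rewrite big_nat1 /= !add0r.
  have ln2_gt0 : (0 : R) < ln 2 by rewrite ln_gt0 ?ltr1n.
  have -> : 2^-1 + (ln 2 + ln 4 - ln 2 / 2) / ln 2 = 1 + ln 4 / ln 2 :> R.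
    by field; rewrite gt_eqF.
  lra.
have L0_gt0 : (0 : R) < ln k.+2%:R by rewrite ln_gt0 ?ltr1n.
have L1_gt0 : (0 : R) < ln k.+3%:R by rewrite ln_gt0 ?ltr1n.
have L01 : ln (k.+2%:R : R) < ln k.+3%:R by rewrite ltr_ln ?posrE ?ltr0n ?ltr_nat.
have M1 := mertens1 (isT : (0 < k.+2)%N).
have ln_ln_step := ln_ratio_ge L0_gt0 L1_gt0.
rewrite (sum_primes_recr (fun p => (p%:R : R)^-1)).
rewrite (sum_primes_recr (fun p => ln (p%:R : R) / p%:R)).
set a := lnp_sum k.+2 in IHk M1 *; set b := invp_sum k.+2 in IHk *.
set L0 := ln (k.+2%:R : R) in IHk M1 L0_gt0 L01 ln_ln_step *.
set L1 := ln (k.+3%:R : R) in L1_gt0 L01 ln_ln_step *.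
have step : (a - ln 4) * (L0^-1 - L1^-1) <= ln L1 - ln L0.
  apply: le_trans ln_ln_step.
  have -> : 1 - L0 / L1 = L0 * (L0^-1 - L1^-1) by field; rewrite !gt_eqF.
  by apply: ler_wpM2r; [rewrite subr_ge0 lef_pV2 ?posrE ?ltW | lra].
have split_prev (e c : R) : b + e + (L1 + ln 4 - (a + c)) / L1
    = b + (L0 + ln 4 - a) / L0 + (a - ln 4) * (L0^-1 - L1^-1) + (e - c / L1).
  by field; rewrite !gt_eqF.
rewrite split_prev; case: (prime k.+3).
  have -> : (k.+3%:R : R)^-1 - L1 / k.+3%:R / L1 = 0 by field; rewrite !gt_eqF ?ltr0n.
  lra.
rewrite mul0r subrr; lra.
Qed.

Lemma mertens2 N : (2 <= N)%N -> invp_sum N <= ln (ln N%:R) + mertens2_const.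
Proof.
case: N => [|[|k]] // _; apply: le_trans (mertens2_slack k); rewrite lerDl.
have := mertens1 (isT : (0 < k.+2)%N).
by move=> M1; rewrite divr_ge0 ?ln_ge0 ?ler1n //; lra.
Qed.

End Mertens.

Section Rankin.
Variable R : realType.

(* Expanding the product over [p < N] of the sums over [k < N] and keeping only
   the terms indexed by the exponent vectors [p |-> logn p d] of the [d \in A]. *)
Lemma sum_prod_logn_le (N : nat) (A : {pred 'I_N}) (F : nat -> nat -> R) :
  (forall p k, 0 <= F p k) -> (forall d : 'I_N, d \in A -> (0 < d)%N) ->
  \sum_(d in A) \prod_(p < N) F p (logn p d) <= \prod_(p < N) \sum_(k < N) F p k.
Proof.
move=> F_ge0; case: N A => [|N] A A_gt0; first by rewrite big_ord0 big1 ?ler01 // => -[].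
pose expo (d : 'I_N.+1) := [ffun p : 'I_N.+1 => (inord (logn p d) : 'I_N.+1)].
have expoE d (p : 'I_N.+1) : d \in A -> expo d p = logn p d :> nat.
  by move=> Ad; rewrite ffunE inordK // (ltn_trans (ltn_logl p (A_gt0 d Ad))).
have expo_inj : {in A &, injective expo}.
  move=> d1 d2 Ad1 Ad2 eq_expo; apply: val_inj => /=.
  rewrite -(prod_expn_logn (A_gt0 d1 Ad1) (ltnSE (ltn_ord d1))).
  rewrite -(prod_expn_logn (A_gt0 d2 Ad2) (ltnSE (ltn_ord d2))).
  by apply: eq_bigr => p _; rewrite -(expoE d1) // -(expoE d2) // eq_expo.
pose G (f : {ffun 'I_N.+1 -> 'I_N.+1}) := \prod_(p < N.+1) F p (f p).
rewrite (eq_bigr (fun d => G (expo d))) => [|d Ad]; last first.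
  by apply: eq_bigr => p _; rewrite expoE.
rewrite -(big_imset _ expo_inj) bigA_distr_bigA /= [leRHS](bigID (mem (expo @: A))) /=.
by rewrite lerDl sumr_ge0 // => f _; apply: prodr_ge0.
Qed.

(* The factor of [p ^ k] in [3 ^ omega d * d ^ (α - 1)], for [d] [y]-smooth. *)
Definition rankin_weight (y α : R) (p k : nat) : R :=
  if k == 0%N then 1
  else if prime p && (p%:R < y) then 3 * (p ^ k)%:R `^ (α - 1) else 0.

Lemma rankin_weight_ge0 y α p k : 0 <= rankin_weight y α p k.
Proof.
rewrite /rankin_weight; case: eqP => // _.
by case: ifP => // _; rewrite mulr_ge0 ?powR_ge0.
Qed.

Lemma powR_prod (I : Type) (s : seq I) (P : pred I) (F : I -> R) (r : R) :
  (forall i, P i -> 0 <= F i) ->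
  (\prod_(i <- s | P i) F i) `^ r = \prod_(i <- s | P i) F i `^ r.
Proof.
move=> F_ge0; elim: s => [|a s IHs]; first by rewrite !big_nil powR1.
rewrite !big_cons; case: ifP => // Pa.
by rewrite powRM ?IHs ?F_ge0 ?prodr_ge0.
Qed.

Lemma prod_rankin_weight y α d N : (0 < d)%N -> (d < N)%N ->
    all (fun p : nat => p%:R < y) (primes d) ->
  \prod_(p < N) rankin_weight y α p (logn p d) = 3 ^+ omega d * d%:R `^ (α - 1).
Proof.
case: N => // N d_gt0 le_dN /allP d_y.
have weightE (p : 'I_N.+1) : rankin_weight y α p (logn p d)
    = (if (p : nat) \in primes d then 3 else 1) * (p ^ logn p d)%:R `^ (α - 1).
  rewrite /rankin_weight; case: (posnP (logn p d)) => [log0|log_gt0].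
    by rewrite -logn_gt0 log0 expn0 powR1 mulr1.
  have p_d : (p : nat) \in primes d by rewrite -logn_gt0.
  have p_pr : prime p by move: p_d; rewrite mem_primes => /andP[].
  by rewrite p_d p_pr d_y.
rewrite (eq_bigr _ (fun p _ => weightE p)) big_split /= -big_mkcond /=.
rewrite -powR_prod => [|p _]; last exact: ler0n.
rewrite -natr_prod (prod_expn_logn d_gt0 le_dN).
congr (_ * _); rewrite -(big_mkord (fun p => p \in primes d) (fun=> 3 : R)) -big_filter.
rewrite (perm_big (primes d)) ?big_const_seq ?count_predT ?iter_mulr_1 //.
apply: uniq_perm; [exact/filter_uniq/iota_uniq | exact: primes_uniq |] => p.
rewrite mem_filter mem_index_iota; case: (boolP (p \in primes d)) => //= p_d.
by move: p_d; rewrite mem_primes => /and3P[_ _ /(dvdn_leq d_gt0)]; lia.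
Qed.

Lemma smooth_term_le_rankin (x δ y α : R) d : 0 < δ -> 1 <= x -> 0 <= α ->
    x `^ δ < d%:R -> in_smooth x y d ->
  3 ^+ omega d / d%:R
    <= x `^ (- (δ * α)) * \prod_(p < (Num.truncn x).+1) rankin_weight y α p (logn p d).
Proof.
move=> δ_gt0 x_ge1 α_ge0 xδ_lt /andP[/andP[d_gt0 d_lt_x] d_y].
rewrite prod_rankin_weight //; last by rewrite ltnS truncn_ge_nat; [exact: ltW | lra].
have d_pos : (0 : R) < d%:R by rewrite ltr0n.
rewrite powRB ?(gt_eqF d_pos) ?implybT // powRr1 ?ler0n // powRN powRrM.
set u := (x `^ δ) `^ α; set v := d%:R `^ α.
have u_gt0 : 0 < u by rewrite !powR_gt0 //; lra.
have le_uv : u <= v.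
  by apply: ge0_ler_powR; rewrite ?nnegrE ?powR_ge0 ?ler0n //; exact: ltW.
have -> : u^-1 * (3 ^+ omega d * (v / d%:R)) = 3 ^+ omega d / d%:R * (v / u).
  by field; rewrite !gt_eqF.
apply: ler_peMr; first by rewrite divr_ge0 ?exprn_ge0 ?ler0n.
by rewrite ler_pdivlMr // mul1r.
Qed.

Definition rankin_factor (α : R) (p : nat) : R :=
  3 * p%:R `^ (α - 1) / (1 - p%:R `^ (α - 1)).

Lemma prime_powR_lt1 (α : R) p : prime p -> α < 1 -> p%:R `^ (α - 1) < 1.
Proof.
move=> p_pr α_lt1; rewrite /powR gt_eqF ?ltr0n ?prime_gt0 // expR_lt1.
by rewrite nmulr_rlt0 ?ln_gt0 ?ltr1n ?prime_gt1 //; lra.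
Qed.

Lemma rankin_factor_ge0 α p : prime p -> α < 1 -> 0 <= rankin_factor α p.
Proof.
move=> p_pr α_lt1; have q_lt1 := prime_powR_lt1 p_pr α_lt1.
by rewrite /rankin_factor divr_ge0 ?mulr_ge0 ?powR_ge0 // subr_ge0 ltW.
Qed.

Lemma sum_exprS_le (q : R) M : 0 <= q < 1 -> \sum_(k < M) q ^+ k.+1 <= q / (1 - q).
Proof.
move=> /andP[q_ge0 q_lt1]; rewrite ler_pdivlMr ?subr_gt0 //.
have -> : (\sum_(k < M) q ^+ k.+1) * (1 - q) = q - q ^+ M.+1.
  elim: M => [|M IHM]; first by rewrite big_ord0 mul0r expr1 subrr.
  by rewrite big_ord_recr /= mulrDl IHM [q ^+ M.+2]exprS; ring.
by rewrite gerBl exprn_ge0.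
Qed.

Lemma powR_exprn (a r : R) k : 0 <= a -> (a ^+ k) `^ r = (a `^ r) ^+ k.
Proof.
move=> a_ge0; rewrite -powR_mulrn // -powRrM mulrC powRrM powR_mulrn //.
exact: powR_ge0.
Qed.

Lemma sum_rankin_weight_le y α p M : α < 1 ->
  \sum_(k < M.+1) rankin_weight y α p k
    <= expR (if prime p && (p%:R < y) then rankin_factor α p else 0).
Proof.
move=> α_lt1; apply: le_trans (expR_ge1Dx _).
rewrite big_ord_recl /rankin_weight /= lerD2l.
case: ifP => [/andP[p_pr _]|_]; last by rewrite big1.
have q_lt1 := prime_powR_lt1 p_pr α_lt1.
rewrite /rankin_factor -mulrA -mulr_sumr ler_pM2l //.
apply: le_trans (sum_exprS_le M _); last by rewrite powR_ge0 q_lt1.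
by apply: ler_sum => k _; rewrite natrX powR_exprn.
Qed.

Lemma sum_primes_ltr_le (g : nat -> R) (y : R) N : (forall p, prime p -> 0 <= g p) ->
  \sum_(p < N | prime p && (p%:R < y)) g p <= \sum_(0 <= p < (Num.truncn y).+1 | prime p) g p.
Proof.
move=> g_ge0; rewrite -(big_mkord (fun p => prime p && (p%:R < y))).
rewrite (big_nat_widen _ _ _ _ _ (leq_maxl N (Num.truncn y).+1)).
rewrite [leRHS](big_nat_widen _ _ _ _ _ (leq_maxr N (Num.truncn y).+1)).
rewrite big_mkcond [leRHS]big_mkcond /=; apply: ler_sum_nat => p _.
case: (boolP (prime p)) => //= p_pr; case: ifP => [/andP[p_y _]|_].
  by rewrite ifT // -(ltr_nat R) (lt_trans p_y (truncnS_gt y)).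
by case: ifP => // _; exact: g_ge0.
Qed.

Lemma smooth_sum_le_rankin (x δ y α : R) : 0 < δ -> 1 <= x -> 0 <= α -> α < 1 ->
  smooth_sum x δ y <= x `^ (- (δ * α)) *
    expR (\sum_(0 <= p < (Num.truncn y).+1 | prime p) rankin_factor α p).
Proof.
move=> δ_gt0 x_ge1 α_ge0 α_lt1; rewrite /smooth_sum; set N := (Num.truncn x).+1.
pose A : {pred 'I_N} :=
  [pred d : 'I_N | (x `^ δ < d%:R) && (d%:R <= x) && in_smooth x y d].
apply: (@le_trans _ _
  (\sum_(d in A) x `^ (- (δ * α)) * \prod_(p < N) rankin_weight y α p (logn p d))).
  by apply: ler_sum => d /andP[/andP[xδ_d _] d_smooth]; exact: smooth_term_le_rankin.
rewrite -mulr_sumr; apply: ler_wpM2l; first exact: powR_ge0.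
apply: le_trans (sum_prod_logn_le (@rankin_weight_ge0 y α) _) _.
  by move=> d /andP[_ /andP[/andP[]]].
apply: (@le_trans _ _ (expR (\sum_(p < N | prime p && (p%:R < y)) rankin_factor α p))).
  rewrite [X in expR X]big_mkcond expR_sum /=; apply: ler_prod => p _.
  by rewrite sumr_ge0 => [|k _]; rewrite ?rankin_weight_ge0 ?sum_rankin_weight_le.
by rewrite ler_expR sum_primes_ltr_le // => p p_pr; exact: rankin_factor_ge0.
Qed.

End Rankin.

Section FactorEstimates.
Variable R : realType.

Lemma gt0_powR_expR (a r : R) : 0 < a -> a `^ r = expR (r * ln a).
Proof. by move=> a_gt0; rewrite /powR gt_eqF. Qed.

Lemma powRB1 (a r : R) : 0 < a -> a `^ (r - 1) = a `^ r / a.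
Proof.
by move=> a_gt0; rewrite powRB ?powRr1 ?(ltW a_gt0) // (gt_eqF a_gt0) implybT.
Qed.

Lemma prime_powR_le34 (α : R) p : prime p -> α <= 2^-1 -> p%:R `^ (α - 1) <= 3 / 4.
Proof.
move=> p_pr α_le; have p_ge2 : (2 : R) <= p%:R by rewrite ler_nat prime_gt1.
set q := p%:R `^ (α - 1); have q_ge0 : 0 <= q by exact: powR_ge0.
suff : q * q <= 2^-1 by nra.
rewrite -expr2 -powR_mulrn ?powR_ge0 // -powRrM.
apply: (@le_trans _ _ (p%:R `^ (-1))); first by apply: ler_powR; lra.
by rewrite powR_inv1 ?ler0n // lef_pV2 ?posrE //; lra.
Qed.

Lemma rankin_factor_le (α : R) p : prime p -> α <= 2^-1 ->
  rankin_factor α p <= 12 * (p%:R `^ α / p%:R).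
Proof.
move=> p_pr α_le; have := prime_powR_le34 p_pr α_le.
rewrite /rankin_factor -powRB1 ?ltr0n ?prime_gt0 //.
by have := powR_ge0 p%:R (α - 1); move: (_ `^ _) => q q_ge0 q_le; rewrite ler_pdivrMr; nra.
Qed.

Lemma expR_subr1_le (z : R) : 0 <= z -> expR z - 1 <= z * expR z.
Proof.
move=> z_ge0; have := expR_ge1Dx (- z); have := expRxMexpNx_1 z.
have := expR_gt0 z; nra.
Qed.

(* Near [α = 0] the bound of [rankin_factor_le] is too weak; expanding
   [p^α <= 1 + α ln p p^α] instead splits the factor into three sums over primes
   that Mertens' estimates and the convergence of [sum 1/p^2] control. *)
Lemma rankin_factor_le_expand (α y : R) p : prime p -> 0 <= α -> α <= 2^-1 ->
    p%:R <= y ->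
  rankin_factor α p <= 3 / p%:R + 3 * α * y `^ α * (ln p%:R / p%:R)
                        + 12 * (y `^ α) ^+ 2 / p%:R ^+ 2.
Proof.
move=> p_pr α_ge0 α_le p_y; have q_le := prime_powR_le34 p_pr α_le.
have p_gt0 : (0 : R) < p%:R by rewrite ltr0n prime_gt0.
have lnp_ge0 : (0 : R) <= ln p%:R by rewrite ln_ge0 // ler1n prime_gt0.
have P_le : p%:R `^ α <= y `^ α.
  by apply: ge0_ler_powR; rewrite ?nnegrE ?ler0n //; lra.
have P_sub1 : p%:R `^ α - 1 <= α * ln p%:R * p%:R `^ α.
  by rewrite gt0_powR_expR // expR_subr1_le ?mulr_ge0.
have factor_le : rankin_factor α p <= 3 * p%:R `^ (α - 1) + 12 * (p%:R `^ (α - 1)) ^+ 2.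
  have := powR_ge0 p%:R (α - 1); move: q_le; rewrite /rankin_factor.
  move: (_ `^ _) => q q_le q_ge0; rewrite ler_pdivrMr; last by lra.
  by rewrite expr2; nra.
apply: le_trans factor_le _; rewrite powRB1 //.
move: P_le P_sub1 (powR_ge0 p%:R α) (powR_ge0 y α).
move: (p%:R `^ α) (y `^ α) => P E P_le P_sub1 P_ge0 E_ge0.
have -> : 3 * (P / p%:R) = 3 / p%:R + 3 * (P - 1) / p%:R by field; rewrite gt_eqF.
rewrite -!addrA lerD2l; apply: lerD.
  rewrite -!mulrA ler_pM2l // !mulrA ler_pM2r ?invr_gt0 //.
  by have := mulr_ge0 α_ge0 lnp_ge0; nra.
rewrite expr_div_n mulrA ler_pM2r ?invr_gt0 ?exprn_gt0 // ler_pM2l //.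
by rewrite lerXn2r ?nnegrE.
Qed.

Lemma truncn_ge2 (y : R) : 2 <= y -> (2 <= Num.truncn y)%N.
Proof. by move=> y_ge2; rewrite truncn_ge_nat //; lra. Qed.

Lemma natr_le_of_ltn_truncn (y : R) p : 0 <= y -> (p < (Num.truncn y).+1)%N -> p%:R <= y.
Proof. by move=> y_ge0; rewrite ltnS -(ler_nat R) => /le_trans; apply; rewrite truncn_le. Qed.

Lemma ln_truncn_le (y : R) : 2 <= y -> ln (Num.truncn y)%:R <= ln y.
Proof.
move=> y_ge2; have M_ge2 := truncn_ge2 y_ge2.
by rewrite ler_ln ?posrE ?ltr0n ?truncn_le; try lia; lra.
Qed.

Lemma mertens1_real (y : R) : 2 <= y ->
  \sum_(0 <= p < (Num.truncn y).+1 | prime p) ln (p%:R : R) / p%:R <= ln y + ln 4.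
Proof.
move=> y_ge2; have := ln_truncn_le y_ge2.
by have := mertens1 R (ltnW (truncn_ge2 y_ge2)); lra.
Qed.

Lemma mertens2_real (y : R) : 2 <= y ->
  \sum_(0 <= p < (Num.truncn y).+1 | prime p) (p%:R : R)^-1
    <= ln (ln y) + mertens2_const R.
Proof.
move=> y_ge2; have lnM_gt0 : (0 : R) < ln (Num.truncn y)%:R.
  by rewrite ln_gt0 // ltr1n truncn_ge2.
have : ln (ln (Num.truncn y)%:R) <= ln (ln y) :> R.
  by rewrite ler_ln ?posrE ?ln_truncn_le //; have := ln_truncn_le y_ge2; lra.
by have := mertens2 R (truncn_ge2 y_ge2); lra.
Qed.

Lemma sum_inv_sqr_primes_le N :
  \sum_(0 <= p < N.+2 | prime p) ((p%:R : R) ^+ 2)^-1 <= 1 - (N.+1%:R)^-1.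
Proof.
elim: N => [|N IHN].
  by rewrite big_mkcond !big_nat_recr //= big_nil invr1 !add0r subrr.
rewrite (sum_primes_recr (fun p => ((p%:R : R) ^+ 2)^-1)).
have a_gt0 : (0 : R) < N.+1%:R by rewrite ltr0n.
have b_eq : (N.+2%:R : R) = N.+1%:R + 1 by rewrite -natr1.
move: IHN b_eq a_gt0; move: (N.+1%:R : R) (N.+2%:R : R) => a b IHN b_eq a_gt0.
have telescope : a^-1 - b^-1 = (a * b)^-1 by rewrite b_eq; field; rewrite !gt_eqF //; lra.
have : (b ^+ 2)^-1 <= (a * b)^-1.
  by rewrite lef_pV2 ?posrE ?exprn_gt0 ?mulr_gt0 // ?expr2 ?ler_wpM2r //; lra.
have : 0 <= (b ^+ 2)^-1 by rewrite invr_ge0 exprn_ge0 //; lra.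
by case: (prime N.+2) => /=; lra.
Qed.

Lemma sum_inv_sqr_primes_le1 N : \sum_(0 <= p < N.+1 | prime p) ((p%:R : R) ^+ 2)^-1 <= 1.
Proof.
case: N => [|N]; first by rewrite big_mkcond big_nat_recr //= big_nil add0r.
by apply: le_trans (sum_inv_sqr_primes_le N) _; rewrite gerDl oppr_le0 invr_ge0.
Qed.

Lemma sum_rankin_factor_le (α y : R) : 0 <= α -> α <= 2^-1 -> 2 <= y ->
  \sum_(0 <= p < (Num.truncn y).+1 | prime p) rankin_factor α p
    <= 12 * y `^ α * (ln (ln y) + mertens2_const R).
Proof.
move=> α_ge0 α_le y_ge2; apply: le_trans (_ : _ <=
  \sum_(0 <= p < (Num.truncn y).+1 | prime p) 12 * y `^ α * (p%:R : R)^-1) _.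
  rewrite big_nat_cond [leRHS]big_nat_cond; apply: ler_sum => p /andP[/andP[_ p_y] p_pr].
  apply: le_trans (rankin_factor_le p_pr α_le) _; rewrite mulrA ler_wpM2r ?invr_ge0 //.
  rewrite ler_wpM2l //; apply: ge0_ler_powR; rewrite ?nnegrE ?ler0n //; first by lra.
  by apply: natr_le_of_ltn_truncn => //; lra.
rewrite -mulr_sumr ler_wpM2l ?mulr_ge0 ?powR_ge0 //.
exact: mertens2_real.
Qed.

Lemma sum_rankin_factor_le_expand (α y : R) : 0 <= α -> α <= 2^-1 -> 2 <= y ->
  \sum_(0 <= p < (Num.truncn y).+1 | prime p) rankin_factor α p <=
  3 * (ln (ln y) + mertens2_const R) + 3 * α * y `^ α * (ln y + ln 4)
  + 12 * (y `^ α) ^+ 2.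
Proof.
move=> α_ge0 α_le y_ge2; set E := y `^ α; have E_ge0 : 0 <= E by exact: powR_ge0.
apply: le_trans (_ : _ <= \sum_(0 <= p < (Num.truncn y).+1 | prime p)
   (3 * (p%:R : R)^-1 + 3 * α * E * (ln p%:R / p%:R) + 12 * E ^+ 2 * (p%:R ^+ 2)^-1)) _.
  rewrite big_nat_cond [leRHS]big_nat_cond; apply: ler_sum => p /andP[/andP[_ p_y] p_pr].
  by apply: rankin_factor_le_expand => //; apply: natr_le_of_ltn_truncn => //; lra.
rewrite !big_split /= -!mulr_sumr.
apply: lerD; [apply: lerD|].
- by rewrite ler_pM2l //; exact: mertens2_real.
- by apply: ler_wpM2l; [rewrite !mulr_ge0 | exact: mertens1_real].
- rewrite -[leRHS]mulr1; apply: ler_wpM2l; first by rewrite mulr_ge0 ?exprn_ge0.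
  exact: sum_inv_sqr_primes_le1.
Qed.

End FactorEstimates.

Section SmoothSums.
Variable R : realType.

Lemma powR_lnln_sqr_le (η c C : R) : 0 < η -> 0 < c -> exists L0 : R, forall L, L0 <= L ->
  (L ^+ 2) `^ (2^-1 - η) * (ln (ln (L ^+ 2)) + C) <= c * L.
Proof.
move=> η_gt0 c_gt0; set K := 2 / η + `|C|.
have K_ge0 : 0 <= K by rewrite addr_ge0 ?divr_ge0 //; lra.
exists (expR 1 + (1 + K / c) `^ η^-1) => L L_ge.
have e_ge2 : (2 : R) <= expR 1 by have := expR_ge1Dx (1 : R); lra.
have L_ge_e : expR 1 <= L by apply: le_trans L_ge; rewrite lerDl powR_ge0.
have L_gt0 : 0 < L by lra.
set u := L `^ η.
have Kc_ge0 : 0 <= K / c := divr_ge0 K_ge0 (ltW c_gt0).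
have u_ge : 1 + K / c <= u.
  have -> : 1 + K / c = ((1 + K / c) `^ η^-1) `^ η.
    by rewrite -powRrM mulVf ?gt_eqF // powRr1 // addr_ge0.
  apply: ge0_ler_powR; rewrite ?nnegrE ?powR_ge0 //; first exact: ltW.
    exact: ltW.
  by apply: le_trans L_ge; rewrite lerDr; lra.
have u_ge1 : 1 <= u by lra.
have lnL_le : ln L <= u / η.
  have := ln_sublinear (powR_gt0 η L_gt0); rewrite ln_powR -/u => lt_lnu.
  by rewrite ler_pdivlMr // mulrC ltW.
have lnL_ge1 : 1 <= ln L by rewrite -(expRK 1) ler_ln ?posrE ?expR_gt0.
have lnln_le : ln (ln (L ^+ 2)) + C <= K * u.
  have : ln (ln (L ^+ 2)) <= 2 * ln L.
    by rewrite lnXn // mulr2n; apply: le_trans (ltW (ln_sublinear _)) _; lra.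
  have : 2 * ln L <= 2 / η * u by rewrite mulrAC -mulrA; apply: ler_wpM2l.
  have : `|C| <= `|C| * u by rewrite ler_peMr.
  by have := ler_norm C; rewrite /K mulrDl; lra.
set P := L `^ (1 - 2 * η).
have -> : (L ^+ 2) `^ (2^-1 - η) = P.
  by rewrite -powR_mulrn ?(ltW L_gt0) // -powRrM; congr (_ `^ _); field.
have L_eq : L = P * u * u.
  rewrite /P /u !gt0_powR_expR // -!expRD -!mulrDl.
  have -> : 1 - 2 * η + η + η = 1 by ring.
  by rewrite mul1r lnK.
have Pu_gt0 : 0 < P * u by rewrite mulr_gt0 ?powR_gt0.
apply: (@le_trans _ _ (P * (K * u))); first by rewrite ler_wpM2l ?powR_ge0.
rewrite [in leRHS]L_eq (_ : P * (K * u) = P * u * (K / c * c)); last by field; rewrite gt_eqF.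
rewrite [in leRHS]mulrCA; apply: ler_wpM2l; first by rewrite mulr_ge0 ?powR_ge0.
by rewrite [in leRHS]mulrC; apply: ler_wpM2r; [exact: ltW | lra].
Qed.

Lemma smooth_sum_ln_sqr_le (δ ε : R) : 0 < δ -> 0 < ε ->
  exists C x0 : R, forall x : R, x0 <= x ->
    smooth_sum x δ (ln x ^+ 2) <= C * x `^ (- (δ / 2) + ε).
Proof.
move=> δ_gt0 ε_gt0; set η := ε / (2 * δ + 4 * ε).
have η_gt0 : 0 < η by rewrite divr_gt0 //; lra.
have η_le : η <= 4^-1 by rewrite ler_pdivrMr; lra.
have δη_le : δ * η <= ε / 2 by rewrite mulrA ler_pdivrMr; nra.
set α := 2^-1 - η.
have c_gt0 : 0 < ε / 24 by lra.
have [L0 L0_ok] := powR_lnln_sqr_le (mertens2_const R) η_gt0 c_gt0.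
exists 1, (expR (`|L0| + 2)) => x x_ge.
have lnx_ge : `|L0| + 2 <= ln x.
  by rewrite -(expRK (`|L0| + 2)) ler_ln ?posrE ?expR_gt0 //; apply: lt_le_trans x_ge.
have := ler_norm L0; have := normr_ge0 L0; move=> L0_norm_ge0 L0_le.
have x_ge1 : 1 <= x by apply: le_trans x_ge; rewrite -[leLHS]expR0 ler_expR addr_ge0.
have lnx_ge2 : 2 <= ln x by lra.
have y_ge2 : 2 <= ln x ^+ 2 by rewrite expr2; nra.
have α_ge0 : 0 <= α by rewrite /α; lra.
have α_le : α <= 2^-1 by rewrite /α; lra.
have L0_lnx : L0 <= ln x by lra.
have sum_le := sum_rankin_factor_le α_ge0 α_le y_ge2.
have small := L0_ok (ln x) L0_lnx.
apply: le_trans (smooth_sum_le_rankin _ δ_gt0 x_ge1 α_ge0 (_ : α < 1)) _; first by lra.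
rewrite mul1r.
apply: (@le_trans _ _ (x `^ (- (δ * α)) * x `^ (ε / 2))).
  by rewrite ler_wpM2l ?powR_ge0 // gt0_powR_expR ?ler_expR; lra.
have exponent_le : - (δ * α) + ε / 2 <= - (δ / 2) + ε by rewrite /α; lra.
have x_gt0 : 0 < x by lra.
by rewrite -powRD ?(gt_eqF x_gt0) ?implybT // ler_powR.
Qed.

(* Case split at [ln T = c / b]. *)
Lemma linear_sub_xlnx_le (b c T : R) : 0 < b -> 0 <= c -> 1 <= T ->
  c * T - b * (T * ln T) <= c * expR (c / b).
Proof.
move=> b_gt0 c_ge0 T_ge1; have T_gt0 : 0 < T by lra.
have lnT_ge0 : 0 <= ln T by exact: ln_ge0.
have := mulr_ge0 (ltW b_gt0) (mulr_ge0 (ltW T_gt0) lnT_ge0).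
have [small|large] := leP (c / b) (ln T).
  have : c <= ln T * b by rewrite -ler_pdivrMr.
  move=> /(ler_wpM2r (ltW T_gt0)).
  by have := mulr_ge0 c_ge0 (expR_ge0 (c / b)); lra.
have : T <= expR (c / b) by rewrite -[leLHS]lnK ?posrE // ler_expR; exact: ltW.
by move=> /(ler_wpM2l c_ge0); lra.
Qed.

Lemma sum_rankin_factor_root_le (y T : R) : 2 <= y -> 1 <= T -> 2 * ln T <= ln y ->
  \sum_(0 <= p < (Num.truncn y).+1 | prime p) rankin_factor (ln T / (2 * ln y)) p
    <= 3 * ln (ln y) + 3 * mertens2_const R + (15 + 3 * ln 4) * T.
Proof.
move=> y_ge2 T_ge1 lnT_le; set α := ln T / (2 * ln y).
have lny_gt0 : 0 < ln y by rewrite ln_gt0 //; lra.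
have lnT_ge0 : 0 <= ln T by exact: ln_ge0.
have ln4_ge0 : (0 : R) <= ln 4 by rewrite ln_ge0 // ler1n.
have α_ge0 : 0 <= α by rewrite divr_ge0 ?mulr_ge0 //; lra.
have α_le : α <= 4^-1 by rewrite ler_pdivrMr ?mulr_gt0 //; lra.
have α_lny : α * ln y = ln T / 2 by rewrite /α; field; rewrite gt_eqF.
set E := y `^ α.
have E_eq : E = expR (ln T / 2) by rewrite /E gt0_powR_expR -?α_lny //; lra.
have E_ge1 : 1 <= E by rewrite E_eq -expR0 ler_expR divr_ge0.
have EE : E * E = T by rewrite E_eq -expRD -splitr lnK // posrE; lra.
have E_lnT : E * (ln T / 2) <= T.
  have : ln T / 2 < E by have := ln_sublinear (lt_le_trans ltr01 E_ge1); rewrite E_eq expRK.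
  by rewrite -EE => ?; apply: ler_wpM2l; lra.
apply: le_trans (sum_rankin_factor_le_expand α_ge0 _ y_ge2) _; first lra.
have -> : 3 * α * E * (ln y + ln 4) = 3 * (E * (ln T / 2)) + 3 * (α * E) * ln 4.
  by rewrite -α_lny; ring.
have : α * E <= T by rewrite -EE ler_wpM2r //; lra.
move: E_lnT; rewrite expr2 EE => E_lnT αE_le.
have := ler_wpM2r ln4_ge0 αE_le; nra.
Qed.

Lemma root_smoothness_bounds (x T : R) : expR (expR 1) <= x -> 1 <= T ->
    ln x ^+ 2 <= x `^ T^-1 ->
  [/\ 1 <= x, 2 <= x `^ T^-1, ln (x `^ T^-1) * T = ln x,
      2 * ln T <= ln (x `^ T^-1) & ln (x `^ T^-1) <= ln x].
Proof.
set y := x `^ T^-1 => x_ge T_ge1 y_ge; have T_gt0 : 0 < T by lra.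
have e_ge2 : (2 : R) <= expR 1 by have := expR_ge1Dx (1 : R); lra.
have x_gt0 : 0 < x by apply: lt_le_trans x_ge; exact: expR_gt0.
have L_ge : expR 1 <= ln x by rewrite -(expRK (expR 1)) ler_ln ?posrE ?expR_gt0.
have lnL_ge1 : 1 <= ln (ln x) by rewrite -(expRK 1) ler_ln ?posrE ?expR_gt0 //; lra.
have x_ge1 : 1 <= x.
  by apply: le_trans x_ge; rewrite -[leLHS]expR0 ler_expR expR_ge0.
have lny_T : ln y * T = ln x by rewrite /y ln_powR mulrAC mulVf ?gt_eqF ?mul1r.
have y_ge2 : 2 <= y by apply: le_trans y_ge; rewrite expr2; nra.
have lnL_le : 2 * ln (ln x) <= ln y.
  have : ln (ln x ^+ 2) <= ln y by rewrite ler_ln ?posrE ?exprn_gt0 //; lra.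
  by rewrite lnXn ?mulr2n //; lra.
have lny_ge1 : 1 <= ln y by lra.
have lny_le : ln y <= ln x by rewrite -lny_T ler_peMr //; lra.
have T_le : T <= ln x by rewrite -lny_T ler_peMl //; lra.
have : ln T <= ln (ln x) by rewrite ler_ln ?posrE //; lra.
by split => //; lra.
Qed.

Lemma smooth_sum_root_le (δ : R) : 0 < δ ->
  exists c : R, 0 < c /\ exists C x0 : R, forall x : R, x0 <= x ->
    forall t : nat, (0 < t)%N -> ln x ^+ 2 <= x `^ (t%:R)^-1 ->
      smooth_sum x δ (x `^ (t%:R)^-1) <= C * ln x ^+ 3 * expR (- (c * t%:R * ln t%:R)).
Proof.
move=> δ_gt0; set A := 15 + 3 * ln (4 : R); set K := A * expR (A / (δ / 4)).
have ln4_ge0 : (0 : R) <= ln 4 by rewrite ln_ge0 // ler1n.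
have A_ge0 : 0 <= A by rewrite /A; lra.
exists (δ / 4); split; first lra.
exists (expR (3 * mertens2_const R + K)), (expR (expR 1)) => x x_ge t t_gt0 y_ge.
set T : R := t%:R; have T_ge1 : 1 <= T by rewrite /T ler1n.
have [x_ge1 y_ge2 lny_T lnT_le lny_le] := root_smoothness_bounds x_ge T_ge1 y_ge.
set y := x `^ T^-1 in y_ge2 lny_T lnT_le lny_le *.
set α := ln T / (2 * ln y).
have lny_gt0 : 0 < ln y by rewrite ln_gt0 //; lra.
have α_ge0 : 0 <= α by rewrite divr_ge0 ?mulr_ge0 ?ln_ge0 //; lra.
have α_lt1 : α < 1 by rewrite ltr_pdivrMr ?mulr_gt0 //; have := ln_ge0 T_ge1; lra.
have δαL : δ * α * ln x = δ / 2 * (T * ln T).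
  by rewrite -lny_T /α; field; rewrite gt_eqF.
apply: le_trans (smooth_sum_le_rankin y δ_gt0 x_ge1 α_ge0 α_lt1) _.
have sum_le := sum_rankin_factor_root_le y_ge2 T_ge1 lnT_le.
have δ4_gt0 : 0 < δ / 4 by lra.
have xlnx_le := linear_sub_xlnx_le δ4_gt0 A_ge0 T_ge1.
rewrite -/α -/A in sum_le; rewrite -/K in xlnx_le.
rewrite gt0_powR_expR; last by lra.
apply: (@le_trans _ _ (expR (3 * mertens2_const R + K) * expR (3 * ln (ln y))
                       * expR (- (δ / 4 * T * ln T)))).
  by rewrite -!expRD ler_expR; lra.
rewrite ler_wpM2r ?expR_ge0 // ler_wpM2l ?expR_ge0 //.
rewrite -[3]/(3%:R) expRM_natl lnK ?posrE // lerXn2r ?nnegrE //; lra.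
Qed.

End SmoothSums.

Theorem lemma2p9 (R : realType) (delta : R) (hd0 : 0 < delta) (hd1 : delta < 1) :
  (forall eps : R, 0 < eps ->
     exists C x0 : R, forall x : R, x0 <= x ->
       smooth_sum x delta (ln x ^+ 2) <= C * powR x (- (delta / 2) + eps))
  /\
  (exists c : R, 0 < c /\
     exists C x0 : R, forall x : R, x0 <= x ->
       forall t : nat, (0 < t)%N -> ln x ^+ 2 <= powR x (t%:R)^-1 ->
         smooth_sum x delta (powR x (t%:R)^-1)
           <= C * ln x ^+ 3 * expR (- (c * t%:R * ln (t%:R)))).
Proof.
split; last exact: smooth_sum_root_le.
by move=> eps eps_gt0; exact: smooth_sum_ln_sqr_le.
Qed.
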